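(* Let $\epsilon>0$ be a constant, $|N|=n$, $k=n^{1/4-\epsilon/2}$, $r=n^{1/4}$, and define $g(S)=|S|$, $b(S)=\min(|S|,\log n)$, $m(S)=\min(1,|S|/n^{1/2})$, $m^+(S)=n^{-1/4}\min(n^{1/2},|S|)$. Then the class $\mathcal F(g,b,m,m^+)$ has an $(n^{1/4-\epsilon},0)$-gap with $t=n^{1/2+\epsilon/4}$.
   Context: $\mathcal P$ is the set of partitions $P$ of $N$ into $r$ parts $T_1,\dots,T_r$ of $k$ elements each and a part $M$ of the remaining $n-rk$ elements; $\mathcal U(\mathcal P)$ is the uniform distribution on $\mathcal P$; $T_{-i}=\bigcup_{j\ne i}T_j$. $\mathcal F(g,b,m,m^+)=\{f^{P,i}:P\in\mathcal P,i\in[r]\}$ with $f^{P,i}(S)=(1-m(S\cap M))(g(S\cap T_i)+b(S\cap T_{-i}))+m^+(S\cap M)$. The class has an $(\alpha,\beta)$-gap with parameter $t$ if: (1) for every fixed $S$ with $|S|\le t$, with probability $1-n^{-\omega(1)}$ over $P\sim\mathcal U(\mathcal P)$, $g(S\cap T_i)+b(S\cap T_{-i})$ does not depend on $i$; (2) for every fixed $S$ with $|S|\ge t$, with probability $1-n^{-\omega(1)}$ over $P\sim\mathcal U(\mathcal P)$, $m(S\cap M)=1$; (3) for every $S$ with $|S|=k$, $g(S)\ge\max\{\alpha b(S),\alpha m^+(S)\}$; (4) for all $S_1$ with $|S_1|=k$ and $S_2$ with $|S_2|=k/r$, $g(S_1)\ge(1-\beta)r\,g(S_2)$. Statements are asymptotic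 in $n$. *)

From HB Require Import structures.
From mathcomp Require Import all_boot all_order all_algebra.
From mathcomp Require Import all_classical all_reals all_analysis.
Set Implicit Arguments. Unset Strict Implicit. Unset Printing Implicit Defensive.
Import Order.TTheory GRing.Theory Num.Theory.
Local Open Scope ring_scope.

Section Partitions.
Variables (n r k : nat).

(* A partition P of N = 'I_n into labelled parts T_1..T_r of k elements each
   and the remaining part M; P is represented by the family (T_i)_i, M being
   the complement of their union. *)
Definition partitions : {set {ffun 'I_r -> {set 'I_n}}} :=
  [set T : {ffun 'I_r -> {set 'I_n}} | [forall i, #|T i| == k] &&
           [forall i, forall j, (i != j) ==> [disjoint T i & T j]]].

Definition Mpart (T : {ffun 'I_r -> {set 'I_n}}) : {set 'I_n} :=
  ~: \bigcup_(i < r) T i.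

Definition Tminus (T : {ffun 'I_r -> {set 'I_n}}) (i : 'I_r) : {set 'I_n} :=
  \bigcup_(j < r | j != i) T j.

Definition prob_unif {R : realType} (E : pred {ffun 'I_r -> {set 'I_n}}) : R :=
  #|[set T in partitions | E T]|%:R / #|partitions|%:R.

Definition fPi {R : realType} (g b m mp : {set 'I_n} -> R)
  (T : {ffun 'I_r -> {set 'I_n}}) (i : 'I_r) (S : {set 'I_n}) : R :=
  (1 - m (S :&: Mpart T)) * (g (S :&: T i) + b (S :&: Tminus T i))
  + mp (S :&: Mpart T).

End Partitions.

(* Asymptotic (alpha,beta)-gap with parameter t for the class F(g,b,m,m^+),
   where all data are indexed by n = |N|.  "with probability 1 - n^{-omega(1)}"
   means: the failure probability is at most n^{-c} for every c > 0, for all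
   sufficiently large n, uniformly over the fixed sets S. *)
Definition has_gap {R : realType} (k r : nat -> nat)
  (g b m mp : forall n : nat, {set 'I_n} -> R) (alpha beta t : nat -> R) : Prop :=
  (forall c : R, 0 < c -> exists n0 : nat, forall n : nat, (n0 <= n)%N ->
     forall S : {set 'I_n}, #|S|%:R <= t n ->
       @prob_unif n (r n) (k n) R
         (fun T : {ffun 'I_(r n) -> {set 'I_n}} =>
            ~~ [forall i, forall j,
                  g n (S :&: T i) + b n (S :&: Tminus T i)
                  == g n (S :&: T j) + b n (S :&: Tminus T j)])
       <= (n%:R : R) `^ (- c)) /\
  (forall c : R, 0 < c -> exists n0 : nat, forall n : nat, (n0 <= n)%N ->
     forall S : {set 'I_n}, t n <= #|S|%:R ->
       @prob_unif n (r n) (k n) R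
         (fun T : {ffun 'I_(r n) -> {set 'I_n}} => m n (S :&: Mpart T) != 1)
       <= (n%:R : R) `^ (- c)) /\
  (exists n0 : nat, forall n : nat, (n0 <= n)%N ->
     forall S : {set 'I_n}, #|S| = k n ->
       Num.max (alpha n * b n S) (alpha n * mp n S) <= g n S) /\
  (exists n0 : nat, forall n : nat, (n0 <= n)%N ->
     forall S1 S2 : {set 'I_n}, #|S1| = k n ->
       (#|S2|%:R : R) = (k n)%:R / (r n)%:R ->
       (1 - beta n) * (r n)%:R * g n S2 <= g n S1).

Definition L25kpar {R : realType} (eps : R) (n : nat) : nat :=
  Num.truncn ((n%:R : R) `^ (4^-1 - eps / 2)).
Definition L25rpar {R : realType} (n : nat) : nat :=
  Num.truncn ((n%:R : R) `^ 4^-1).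
Definition L25gfun {R : realType} (n : nat) (S : {set 'I_n}) : R := #|S|%:R.
Definition L25bfun {R : realType} (n : nat) (S : {set 'I_n}) : R :=
  Num.min (#|S|%:R) (ln (n%:R : R)).
Definition L25mfun {R : realType} (n : nat) (S : {set 'I_n}) : R :=
  Num.min 1 (#|S|%:R / (n%:R : R) `^ 2^-1).
Definition L25mpfun {R : realType} (n : nat) (S : {set 'I_n}) : R :=
  (n%:R : R) `^ (- 4^-1) * Num.min ((n%:R : R) `^ 2^-1) (#|S|%:R).

From HB Require Import structures.
From mathcomp Require Import all_boot all_order all_algebra.
From mathcomp Require Import all_classical all_reals all_analysis.
From mathcomp Require Import all_fingroup zify lra.
Import Order.TTheory GRing.Theory Num.Theory.

(* Write U = T_1 :|: ... :|: T_r, so that M = ~: U.  While |S :&: U| <= ln n, the sum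
   g(S :&: T_i) + b(S :&: T_{-i}) equals |S :&: U| for every i, so condition (1) can only
   fail when S meets U in L > ln n points.  Relabelling the ground set preserves the
   uniform distribution on partitions, hence every L-set is contained in U with the same
   probability, which averaging over all L-sets bounds by (rk/n)^L.  A union bound over
   the L-subsets of S gives probability at most (|S| rk / n)^L <= n^(-eps L / 4), which is
   n^(-omega(1)) since L grows like ln n.  Condition (2) holds for every partition since
   |S :&: M| >= |S| - rk >= n^(1/2), and (3), (4) are direct estimates. *)

Lemma expn_homo e : {homo expn^~ e : m1 m2 / m1 <= m2}.
Proof. by move=> m1 m2 h; elim: e => [|e IH]; rewrite ?expnS ?leq_mul. Qed.

Lemma ffact_mul_exp_le L {a N} : a <= N -> a ^_ L * N ^ L <= N ^_ L * a ^ L.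
Proof.
move=> aN; elim: L => [|L IH]; first by rewrite !muln1.
have step : (a - L) * N <= (N - L) * a by nia.
by rewrite !ffactnSr !expnS (mulnC N) (mulnC a) mulnACA [X in _ <= X]mulnACA leq_mul.
Qed.

Lemma bin_mul_exp_le L {a N} : a <= N -> 'C(a, L) * N ^ L <= 'C(N, L) * a ^ L.
Proof.
move=> aN; rewrite -(leq_pmul2r (fact_gt0 L)) mulnAC bin_ffact.
by rewrite [X in _ <= X]mulnAC bin_ffact ffact_mul_exp_le.
Qed.

Lemma bin_le_exp s L : 'C(s, L) <= s ^ L.
Proof.
apply: leq_trans (leq_pmulr _ (fact_gt0 L)) _; rewrite bin_ffact.
by elim: L => [|L IH] //; rewrite ffactnSr expnS mulnC leq_mul ?leq_subr.
Qed.

Lemma card_set_sum (X : finType) (D q : pred X) :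
  #|[set x | D x & q x]| = \sum_(x | D x) q x.
Proof.
by rewrite -sum1dep_card big_mkcondr; apply: eq_bigr => x _; case: (q x).
Qed.

Lemma exists_perm_imset (X : finType) (A B : {set X}) :
  #|A| = #|B| -> exists s : {perm X}, s @: A = B.
Proof.
move: {2}#|A :\: B| (leqnn #|A :\: B|) => m; elim: m A => [|m IH] A.
  rewrite leqn0 cards_eq0 finset.setD_eq0 => AB cAB; exists 1%g.
  rewrite (eq_imset _ (@perm1 _)) imset_id.
  by apply/eqP; rewrite eqEcard AB cAB leqnn.
move=> small_diff cAB; have [AB0|] := eqVneq (A :\: B) finset.set0.
  by apply: (IH A) => //; rewrite AB0 cards0.
case/finset.set0Pn => a /setDP [aA aB].
have : B :\: A != finset.set0.
  apply: contra aB => /eqP BA0.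
  suff <- : A = B by [].
  by apply/esym/eqP; rewrite eqEcard -finset.setD_eq0 BA0 eqxx cAB leqnn.
case/finset.set0Pn => b /setDP [bB bA].
(* swapping a and b brings A one element closer to B *)
pose t := tperm a b.
have ctA : #|t @: A| = #|B| by rewrite card_imset //; exact: perm_inj.
have sub : t @: A :\: B \subset (A :\: B) :\ a.
  apply/fintype.subsetP => _ /setDP [/imsetP [x xA ->] txB].
  rewrite !finset.inE; move: txB; rewrite /t.
  case: tpermP => [xa|xb|xa xb].
  - by rewrite bB.
  - by rewrite -xb xA in bA.
  - by move=> h; apply/and3P; split => //; apply/eqP.
have : #|t @: A :\: B| <= m.
  have := subset_leq_card sub; have := cardsD1 a (A :\: B).
  rewrite finset.inE aA aB /=; lia.
case/(IH _)/(_ ctA) => s sA; exists (t * s)%g.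
by rewrite -sA -imset_comp; apply: eq_imset => x /=; rewrite permM.
Qed.

Section PartitionCounting.
Local Set Implicit Arguments. Local Unset Strict Implicit.
Variables n r k : nat.
Local Notation P := (partitions n r k).
Local Notation family := {ffun 'I_r -> {set 'I_n}}.

Definition parts_union (T : family) : {set 'I_n} := \bigcup_(i < r) T i.

Definition relabel (s : {perm 'I_n}) (T : family) : family := [ffun i => s @: T i].

Lemma relabel_partition s T : T \in P -> relabel s T \in P.
Proof.
rewrite !finset.inE => /andP[/forallP card_k /forallP disj]; apply/andP; split.
  by apply/forallP => i; rewrite ffunE card_imset //; exact: perm_inj.
apply/forallP => i; apply/forallP => j; apply/implyP => ij.
rewrite !ffunE imset_disjoint; last exact: perm_inj.
by move/forallP: (disj i) => /(_ j) /implyP; apply.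
Qed.

Lemma relabelK s : cancel (relabel s) (relabel s^-1).
Proof.
move=> T; apply/ffunP => i; rewrite !ffunE -imset_comp.
by rewrite (eq_imset _ (permK s)) imset_id.
Qed.

Lemma parts_union_relabel s T : parts_union (relabel s T) = s @: parts_union T.
Proof.
apply/finset.setP => x; apply/bigcupP/imsetP => [[i _]|[y /bigcupP[i _ yi] ->]].
  by rewrite ffunE => /imsetP[y yi ->]; exists y => //; apply/bigcupP; exists i.
by exists i => //; rewrite ffunE imset_f.
Qed.

Lemma parts_union_split T i : T \in P ->
  parts_union T = T i :|: Tminus T i /\ [disjoint T i & Tminus T i].
Proof.
rewrite finset.inE => /andP[_ /forallP /(_ i) /forallP disj].
split; first by rewrite /parts_union (bigD1 i).
by apply: bigcup_disjoint => j ji; move/implyP: (disj j); apply; rewrite eq_sym.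
Qed.

Lemma card_parts_union T : T \in P -> #|parts_union T| <= r * k.
Proof.
rewrite finset.inE => /andP[/forallP card_k _].
have -> : r * k = \sum_(i < r) k by rewrite sum_nat_const card_ord mulnC.
rewrite /parts_union; elim/big_rec2: _ => [|i U m _ IH]; first by rewrite cards0.
apply: leq_trans (leq_card_setU _ _).1 _.
by rewrite leq_add ?(eqP (card_k i)).
Qed.

Lemma card_meet_parts_union (S : {set 'I_n}) T i : T \in P ->
  #|S :&: parts_union T| = #|S :&: T i| + #|S :&: Tminus T i|.
Proof.
case/(parts_union_split i) => -> /disjoint_setI0 dis.
by rewrite finset.setIUr cardsU finset.setIACA finset.setIid dis finset.setI0 cards0 subn0.
Qed.

Lemma card_le_meet_Mpart (S : {set 'I_n}) T : T \in P -> #|S| <= r * k + #|S :&: Mpart T|.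
Proof.
move=> TP; rewrite -(cardsID (parts_union T) S) finset.setDE.
apply: leq_add; last exact: leqnn.
by rewrite (leq_trans (subset_leq_card (finset.subsetIr _ _))) ?card_parts_union.
Qed.

Definition covering (A : {set 'I_n}) := [set T in P | A \subset parts_union T].

Lemma card_covering_imset (s : {perm 'I_n}) A : #|covering A| <= #|covering (s @: A)|.
Proof.
rewrite -(card_imset _ (can_inj (relabelK s))).
apply: subset_leq_card; apply/fintype.subsetP => y /imsetP[T].
rewrite finset.inE => /andP[TP AU] ->.
by rewrite finset.inE relabel_partition // parts_union_relabel imsetS.
Qed.

Lemma card_covering_eq (A B : {set 'I_n}) : #|A| = #|B| -> #|covering A| = #|covering B|.
Proof.
case/exists_perm_imset => s <-; apply/eqP; rewrite eqn_leq card_covering_imset.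
have sK : (s^-1)%g @: (s @: A) = A by rewrite -imset_comp (eq_imset _ (permK s)) imset_id.
by rewrite -{2}sK card_covering_imset.
Qed.

Lemma sum_card_covering (p : pred {set 'I_n}) :
  \sum_(A | p A) #|covering A| =
   \sum_(T in P) #|[set A | p A & A \subset parts_union T]|.
Proof.
under eq_bigr => A _ do rewrite card_set_sum.
by rewrite exchange_big /=; apply: eq_bigr => T _; rewrite card_set_sum.
Qed.

Lemma card_covering_le A : #|covering A| * n ^ #|A| <= #|P| * (r * k) ^ #|A|.
Proof.
set L := #|A|.
have C_gt0 : 0 < 'C(n, L) by rewrite bin_gt0 (leq_trans (max_card _)) ?card_ord.
rewrite -(leq_pmul2l C_gt0) mulnA.
have -> : 'C(n, L) * #|covering A| = \sum_(B : {set 'I_n} | #|B| == L) #|covering B|.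
  rewrite -[n in 'C(n, L)]card_ord -card_draws -sum_nat_const.
  by apply/esym/eq_big => [B|B /eqP]; [rewrite finset.inE | apply: card_covering_eq].
rewrite sum_card_covering big_distrl /= mulnCA -sum_nat_const.
apply: leq_sum => T TP.
have -> : #|[set B : {set 'I_n} | #|B| == L & B \subset parts_union T]| =
          'C(#|parts_union T|, L).
  by rewrite -cards_draws; apply: eq_card => B; rewrite !finset.inE andbC.
have U_le_n : #|parts_union T| <= n by rewrite (leq_trans (max_card _)) ?card_ord.
apply: leq_trans (bin_mul_exp_le L U_le_n) _.
by rewrite leq_mul2l expn_homo ?orbT ?card_parts_union.
Qed.

Lemma card_meet_parts_union_ge (S : {set 'I_n}) L :
  #|[set T in P | L <= #|S :&: parts_union T|]| * n ^ L <= (#|S| * (r * k)) ^ L * #|P|.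
Proof.
have [Ln|nL] := leqP L n; last first.
  rewrite (_ : [set T in P | _] = finset.set0) ?cards0 //.
  apply/finset.setP => T; rewrite !finset.inE; apply/negbTE; rewrite negb_and -ltnNge.
  by rewrite (leq_ltn_trans _ nL) ?orbT // (leq_trans (max_card _)) ?card_ord.
have : 0 < #|[set A : {set 'I_n} | #|A| == L]| by rewrite card_draws card_ord bin_gt0.
case/card_gt0P => A0; rewrite finset.inE => /eqP cA0.
have meet_le : #|[set T in P | L <= #|S :&: parts_union T|]| <=
                'C(#|S|, L) * #|covering A0|.
  have -> : 'C(#|S|, L) * #|covering A0| =
             \sum_(A : {set 'I_n} | (A \subset S) && (#|A| == L)) #|covering A|.
    rewrite -cards_draws -sum_nat_const; apply/esym/eq_big => [A|A /andP[_ /eqP cA]].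
      by rewrite finset.inE.
    by apply: card_covering_eq; rewrite cA cA0.
  rewrite sum_card_covering -sum1_card.
  apply: (@leq_trans (\sum_(T in P) 'C(#|S :&: parts_union T|, L))).
    rewrite big_mkcond [X in _ <= X]big_mkcond /=; apply: leq_sum => T _.
    by rewrite finset.inE; case: (T \in P) => //=; case: ifP => // ?; rewrite bin_gt0.
  apply: leq_sum => T _; rewrite -cards_draws; apply: subset_leq_card.
  apply/fintype.subsetP => A; rewrite !finset.inE finset.subsetI.
  by case: (A \subset S); case: (A \subset parts_union T); case: (#|A| == L).
apply: leq_trans (leq_mul meet_le (leqnn (n ^ L))) _.
rewrite -mulnA -cA0; apply: leq_trans (leq_mul (bin_le_exp _ _) (card_covering_le A0)) _.
by rewrite (expnMn #|S|) mulnCA mulnC.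
Qed.

End PartitionCounting.

Local Open Scope ring_scope.

Lemma prob_unif_eq0 {R : realType} {n r k} (E : pred {ffun 'I_r -> {set 'I_n}}) :
  (forall T, T \in partitions n r k -> ~~ E T) -> @prob_unif n r k R E = 0.
Proof.
move=> noE; rewrite /prob_unif (_ : [set T in _ | _] = finset.set0) ?cards0 ?mul0r //.
apply/eqP; rewrite -finset.subset0.
by apply/fintype.subsetP => T /finset.setIdP[/noE/negP nE /nE].
Qed.

Lemma prob_unbalanced_le {R : realType} {n r k} (S : {set 'I_n}) (lam : R) :
  (0 < n)%N -> 0 <= lam ->
  @prob_unif n r k R (fun T => ~~ [forall i, forall j,
      #|S :&: T i|%:R + Num.min #|S :&: Tminus T i|%:R lam
      == #|S :&: T j|%:R + Num.min #|S :&: Tminus T j|%:R lam])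
  <= ((#|S| * (r * k))%:R / n%:R) ^+ (Num.truncn lam).+1.
Proof.
move=> n_gt0 lam_ge0; set L := (Num.truncn lam).+1.
set B := [set T in partitions n r k | L <= #|S :&: parts_union T|]%N.
rewrite /prob_unif; apply: (@le_trans _ _ (#|B|%:R / #|partitions n r k|%:R)).
  rewrite ler_wpM2r ?invr_ge0 // ler_nat; apply: subset_leq_card.
  apply/fintype.subsetP => T /finset.setIdP[TP]; apply: contraR.
  rewrite finset.in_set TP /= -ltnNge ltnS => small.
  have value i : #|S :&: T i|%:R + Num.min #|S :&: Tminus T i|%:R lam
                 = #|S :&: parts_union T|%:R :> R.
    rewrite (card_meet_parts_union _ i TP) natrD min_l //.
    apply: le_trans (_ : (Num.truncn lam)%:R <= lam); last by rewrite truncn_le.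
    by rewrite ler_nat (leq_trans _ small) // (card_meet_parts_union _ i TP) leq_addl.
  by apply/forallP => i; apply/forallP => j; rewrite !value.
have [->|P_gt0] := posnP #|partitions n r k|.
  by rewrite invr0 mulr0 exprn_ge0 // divr_ge0.
rewrite ler_pdivrMr ?ltr0n // expr_div_n mulrAC ler_pdivlMr ?exprn_gt0 ?ltr0n //.
by rewrite -!natrX -!natrM ler_nat card_meet_parts_union_ge.
Qed.

Section ExpLnNat.
Local Set Implicit Arguments. Local Unset Strict Implicit.
Variable R : realType.

Lemma powR_natE (n : nat) (x : R) : (0 < n)%N -> n%:R `^ x = expR (x * ln n%:R).
Proof. by move=> n_gt0; rewrite /powR pnatr_eq0 gtn_eqF. Qed.

Lemma expR_ln_natr (n : nat) : (0 < n)%N -> expR (ln n%:R) = n%:R :> R.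
Proof. by move=> n_gt0; rewrite lnK // posrE ltr0n. Qed.

Lemma eventually_ln_ge (C : R) :
  exists n0 : nat, forall n, (n0 <= n)%N -> (0 < n)%N /\ C <= ln (n%:R : R).
Proof.
exists (Num.truncn (expR C)).+1 => n n0_le; split; first exact: leq_trans n0_le.
have C_lt : expR C < n%:R by apply: lt_le_trans (truncnS_gt _) _; rewrite ler_nat.
by rewrite -ler_expR lnK ?posrE ?(ltW C_lt) // (lt_trans (expR_gt0 C)).
Qed.

Lemma le_expR_mul (c a x : R) : 0 < c -> 0 < a -> 2 * c / a ^+ 2 <= x ->
  c * x <= expR (a * x).
Proof.
move=> c_gt0 a_gt0; rewrite ler_pdivrMr ?exprn_gt0 // => x_ge.
have x_ge0 : 0 <= x by nra.
apply: le_trans (expR_ge1Dxn 1 (mulr_ge0 (ltW a_gt0) x_ge0)).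
rewrite (_ : (1`!.+1)%:R = 2 :> R) //; nra.
Qed.

End ExpLnNat.

Section Lemma25Estimates.
Local Set Implicit Arguments. Local Unset Strict Implicit.
Variables (R : realType) (eps : R).
Hypothesis eps_gt0 : 0 < eps.

Lemma L25rpar_le n : (0 < n)%N -> (@L25rpar R n)%:R <= expR (4^-1 * ln n%:R) :> R.
Proof. by move=> n_gt0; rewrite /L25rpar powR_natE // truncn_le expR_ge0. Qed.

Lemma L25kpar_le n : (0 < n)%N -> (L25kpar eps n)%:R <= expR ((4^-1 - eps / 2) * ln n%:R).
Proof. by move=> n_gt0; rewrite /L25kpar powR_natE // truncn_le expR_ge0. Qed.

Lemma L25kpar_gt n : (0 < n)%N ->
  expR ((4^-1 - eps / 2) * ln n%:R) < (L25kpar eps n).+1%:R.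
Proof. by move=> n_gt0; rewrite /L25kpar -powR_natE // truncnS_gt. Qed.

Lemma L25_rk_le n : (0 < n)%N ->
  (@L25rpar R n * L25kpar eps n)%:R <= expR ((2^-1 - eps / 2) * ln n%:R).
Proof.
move=> n_gt0; rewrite natrM.
apply: le_trans (ler_pM (ler0n _ _) (ler0n _ _) (L25rpar_le n_gt0) (L25kpar_le n_gt0)) _.
by rewrite -expRD ler_expR; lra.
Qed.

Lemma lemma25_balanced_whp (c : R) : 0 < c ->
  exists n0 : nat, forall n : nat, (n0 <= n)%N ->
  forall S : {set 'I_n}, #|S|%:R <= n%:R `^ (2^-1 + eps / 4) ->
  @prob_unif n (@L25rpar R n) (L25kpar eps n) R (fun T => ~~ [forall i, forall j,
      L25gfun (S :&: T i) + L25bfun (S :&: Tminus T i)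
      == L25gfun (S :&: T j) + L25bfun (S :&: Tminus T j) :> R])
  <= n%:R `^ (- c).
Proof.
move=> c_gt0; have [n0 large] := eventually_ln_ge (4 * c / eps).
exists n0 => n /large [n_gt0 ln_ge] S; rewrite !powR_natE //.
set l := ln n%:R in ln_ge * => S_le.
have l_ge0 : 0 <= l by apply: le_trans ln_ge; rewrite divr_ge0 ?mulr_ge0 ?ltW.
apply: le_trans (prob_unbalanced_le S l n_gt0 l_ge0) _.
have ratio_le : (#|S| * (@L25rpar R n * L25kpar eps n))%:R / n%:R
                <= expR (- (eps / 4 * l)).
  rewrite ler_pdivrMr ?ltr0n // -[n%:R in X in _ <= X]expR_ln_natr // -expRD natrM.
  apply: le_trans (ler_pM (ler0n _ _) (ler0n _ _) S_le (L25_rk_le n_gt0)) _.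
  by rewrite -expRD ler_expR -/l; lra.
apply: le_trans (_ : expR (- (eps / 4 * l)) ^+ (Num.truncn l).+1 <= _).
  by apply: lerXn2r; rewrite ?nnegrE ?expR_ge0 ?divr_ge0.
rewrite -expRM_natl ler_expR.
have : c <= eps / 4 * l by move: ln_ge; rewrite ler_pdivrMr //; nra.
by have := truncnS_gt l; nra.
Qed.

Lemma lemma25_mass_saturated : exists n0 : nat, forall n : nat, (n0 <= n)%N ->
  forall S : {set 'I_n}, n%:R `^ (2^-1 + eps / 4) <= #|S|%:R ->
  forall T, T \in partitions n (@L25rpar R n) (L25kpar eps n) ->
  L25mfun (S :&: Mpart T) = 1 :> R.
Proof.
have [n0 large] := eventually_ln_ge (4 / eps).
exists n0 => n /large [n_gt0 ln_ge] S; rewrite powR_natE //.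
set l := ln n%:R in ln_ge * => S_ge T TP.
rewrite /L25mfun min_l // powR_natE // ler_pdivlMr ?expR_gt0 // mul1r -/l.
have := card_le_meet_Mpart S TP; rewrite -(ler_nat R) natrD => S_le.
have rk_le : (@L25rpar R n * L25kpar eps n)%:R <= expR (2^-1 * l).
  apply: le_trans (L25_rk_le n_gt0) _; rewrite ler_expR -/l.
  have l_gt0 : 0 < l by apply: lt_le_trans ln_ge; rewrite divr_gt0.
  by rewrite ler_pM2r // gerBl divr_ge0 ?ltW.
have two_le : 2 <= expR (eps / 4 * l).
  by apply: le_trans (expR_ge1Dx _); move: ln_ge; rewrite ler_pdivrMr //; lra.
have : expR (2^-1 * l) * expR (eps / 4 * l) <= #|S|%:R.
  by rewrite -expRD; apply: le_trans S_ge; rewrite ler_expR; lra.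
by have := expR_gt0 (2^-1 * l); nra.
Qed.

Lemma lemma25_g_dominates : exists n0 : nat, forall n : nat, (n0 <= n)%N ->
  forall S : {set 'I_n}, #|S| = L25kpar eps n ->
  Num.max (n%:R `^ (4^-1 - eps) * L25bfun S) (n%:R `^ (4^-1 - eps) * L25mpfun S)
  <= L25gfun S.
Proof.
have [n0 large] := eventually_ln_ge (2 * 2 / (eps / 2) ^+ 2).
exists n0 => n /large [n_gt0 ln_ge] S S_k.
rewrite /L25gfun /L25bfun /L25mpfun S_k !powR_natE //.
set l := ln n%:R in ln_ge *; set k := L25kpar eps n.
have l_ge0 : 0 <= l by apply: le_trans ln_ge; rewrite divr_ge0 ?exprn_ge0 ?divr_ge0 ?ltW.
rewrite ge_max; apply/andP; split.
  have [k0|k_gt0] := posnP k; first by rewrite k0 min_l ?mulr0.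
  apply: le_trans (ler_wpM2l (expR_ge0 _) (_ : _ <= l)) _; first by rewrite ge_min lexx orbT.
  have x_le : expR ((4^-1 - eps / 2) * l) <= 2 * k%:R.
    by apply: le_trans (ltW (L25kpar_gt n_gt0)) _; rewrite -natrM ler_nat; lia.
  have two_l := le_expR_mul (ltr0Sn _ 1) (divr_gt0 eps_gt0 (ltr0Sn _ 1)) ln_ge.
  have -> : expR ((4^-1 - eps) * l) = expR ((4^-1 - eps / 2) * l) / expR (eps / 2 * l).
    by rewrite -expRN -expRD; congr expR; lra.
  rewrite mulrAC ler_pdivrMr ?expR_gt0 //.
  by have := expR_ge0 ((4^-1 - eps / 2) * l); nra.
rewrite mulrA -expRD.
apply: le_trans (ler_wpM2l (expR_ge0 _) (_ : _ <= k%:R)) _; first by rewrite ge_min lexx orbT.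
rewrite ler_piMl // -expR0 ler_expR -mulrDl addrAC subrr add0r.
by rewrite mulNr oppr_le0 mulr_ge0 // ltW.
Qed.

End Lemma25Estimates.

Theorem lemma25 (R : realType) (eps : R) (heps : 0 < eps) :
  has_gap (L25kpar eps) (@L25rpar R) (@L25gfun R) (@L25bfun R) (@L25mfun R) (@L25mpfun R)
    (fun n => (n%:R : R) `^ (4^-1 - eps)) (fun _ => 0)
    (fun n => (n%:R : R) `^ (2^-1 + eps / 4)).
Proof.
split; first exact: lemma25_balanced_whp heps.
split.
  move=> c _; have [n0 large] := lemma25_mass_saturated heps.
  exists n0 => n /large saturated S /saturated mass_eq1.
  by rewrite prob_unif_eq0 ?powR_ge0 // => T /mass_eq1 ->; rewrite eqxx.
split; first exact: lemma25_g_dominates heps.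
exists 0%N => n _ S1 S2 S1_k S2_k; rewrite /L25gfun S1_k S2_k subr0 mul1r.
have [->|r_neq0] := eqVneq (@L25rpar R n) 0%N; first by rewrite mul0r.
by rewrite mulrC divfK ?pnatr_eq0.
Qed.
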